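(* Let $v\in C^1([0,T];C^1(\mathcal K^* ))$ and $B\in C([0,T];C^0(\mathcal K^* ))$ solve the discrete incompressible Euler equations $\frac{dv}{dt}+I_v(\tilde D_1v)+\tilde D_0B=0$, $D_2M_1v=0$. Then the discrete kinetic energy $E^{\rm kin}(t)=\frac12\langle v,v\rangle_1=\frac12\sum_j\frac{A_j}{\ell_j^*}v_j^2$ is constant in time: $\frac{dE^{\rm kin}}{dt}=0$.
   Context: $C^k(\mathcal K^* )$ denotes real dual $k$-cochains on a Delaunay–Voronoi cell complex; velocity $v$ has one value per dual edge $e_j^*$ of length $\ell_j^*$, dual to primal face $f_j$ of area $A_j$. $M_1$ is the positive diagonal matrix with $(M_1)_{jj}=A_j/\ell_j^*$, $\langle v,w\rangle_1=v^TM_1w$. $\tilde D_0,\tilde D_1$ are dual coboundary matrices, $D_2$ the primal coboundary from faces to cells, satisfying summation by parts $\langle\tilde D_0B,v\rangle_1=B^TD_2M_1v$. The contraction $I_v:C^2(\mathcal K^* )\to C^1(\mathcal K^* )$ is defined by $M_1I_v(\omega)=\frac12(\tilde U(v)\omega-\tilde D_1^T\tilde U(v)^Tv)$, where $\tilde U(v)$ is a matrix (of the shape of $\tilde D_1^T$) depending linearly on $v$. *)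

From HB Require Import structures.
From mathcomp Require Import all_boot all_order all_algebra.
From mathcomp Require Import all_classical all_reals all_analysis.
Set Implicit Arguments. Unset Strict Implicit. Unset Printing Implicit Defensive.
Import Order.TTheory GRing.Theory Num.Theory.
Import numFieldNormedType.Exports.
Local Open Scope ring_scope.

(* Cochain spaces as column vectors:
   n0 = #dual 0-cells (= primal cells), n1 = #dual edges (= primal faces),
   n2 = #dual 2-cells (= primal edges). *)

Definition hodge1 (R : realType) (n1 : nat) (A ell : 'I_n1 -> R) : 'M[R]_n1 :=
  diag_mx (\row_j (A j / ell j)).

Definition ip1 (R : realType) (n1 : nat) (M1 : 'M[R]_n1) (v w : 'cV[R]_n1) : R :=
  (v^T *m M1 *m w) 0 0.

Definition contr_Iv (R : realType) (n1 n2 : nat) (M1 : 'M[R]_n1)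
  (Dt1 : 'M[R]_(n2, n1)) (U : 'cV[R]_n1 -> 'M[R]_(n1, n2))
  (v : 'cV[R]_n1) (om : 'cV[R]_n2) : 'cV[R]_n1 :=
  invmx M1 *m ((2%:R)^-1 *: (U v *m om - Dt1^T *m (U v)^T *m v)).

Definition Ekin (R : realType) (n1 : nat) (M1 : 'M[R]_n1) (v : 'cV[R]_n1) : R :=
  (2%:R)^-1 * ip1 M1 v v.

From HB Require Import structures.
From mathcomp Require Import all_boot all_order all_algebra.
From mathcomp Require Import all_classical all_reals all_analysis.
From mathcomp Require Import ring.
Set Implicit Arguments. Unset Strict Implicit. Unset Printing Implicit Defensive.
Import Order.TTheory GRing.Theory Num.Theory.
Import numFieldNormedType.Exports.
Local Open Scope classical_set_scope.
Local Open Scope ring_scope.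

(* Energy balance: [dE/dt = <dv/dt, v>_1].  The pressure term [<D0~ B, v>_1]
   vanishes by summation by parts because [v] is divergence free, and the
   Lamb term [<I_v(D1~ v), v>_1] vanishes because [M1] cancels against the
   [M1^-1] hidden in [I_v], leaving [(U w)^T v - (D1~^T U^T v)^T v] with
   [w = D1~ v], a scalar minus its own transpose. *)

Section InnerProduct.
Variables (R : realType) (n : nat).

Lemma ip1_addl (M : 'M[R]_n) (x y w : 'cV[R]_n) :
  ip1 M (x + y) w = ip1 M x w + ip1 M y w.
Proof. by rewrite /ip1 linearD /= !mulmxDl mxE. Qed.

Lemma ip1_oppl (M : 'M[R]_n) (x w : 'cV[R]_n) : ip1 M (- x) w = - ip1 M x w.
Proof. by rewrite /ip1 linearN /= !mulNmx mxE. Qed.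

Lemma ip1_hodge1 (A ell : 'I_n -> R) (x y : 'cV[R]_n) :
  ip1 (hodge1 A ell) x y = \sum_i A i / ell i * (x i 0 * y i 0).
Proof.
rewrite /ip1 /hodge1 !mxE; apply: eq_bigr => i _.
rewrite !mxE (bigD1 i) //= big1 ?addr0; last first.
  by move=> j /negPf ji; rewrite !mxE ji mulr0n mulr0.
by rewrite !mxE eqxx mulr1n; ring.
Qed.

Lemma hodge1_unitmx (A ell : 'I_n -> R) :
  (forall j, A j / ell j != 0) -> hodge1 A ell \in unitmx.
Proof.
move=> nz; rewrite unitmxE /hodge1 det_diag unitfE.
by apply/prodf_neq0 => i _; rewrite mxE.
Qed.

Lemma ip1_invmx_hodge1 (A ell : 'I_n -> R) (X y : 'cV[R]_n) :
  (forall j, A j / ell j != 0) ->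
  ip1 (hodge1 A ell) (invmx (hodge1 A ell) *m X) y = (X^T *m y) 0 0.
Proof.
move=> nz; have invM : (invmx (hodge1 A ell))^T *m hodge1 A ell = 1%:M.
  by rewrite trmx_inv /hodge1 tr_diag_mx -/(hodge1 A ell) mulVmx ?hodge1_unitmx.
by rewrite /ip1 trmx_mul -(mulmxA X^T) invM mulmx1.
Qed.

End InnerProduct.

Lemma ip1_grad_divfree (R : realType) (n0 n1 : nat) (M : 'M[R]_n1)
    (Dt0 : 'M[R]_(n1, n0)) (D2 : 'M[R]_(n0, n1)) (b : 'cV[R]_n0) (w : 'cV[R]_n1) :
  ip1 M (Dt0 *m b) w = (b^T *m D2 *m M *m w) 0 0 ->
  D2 *m M *m w = 0 -> ip1 M (Dt0 *m b) w = 0.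
Proof. by move=> -> divw; rewrite -!mulmxA [D2 *m _]mulmxA divw mulmx0 mxE. Qed.

Lemma ip1_contr_Iv_vorticity (R : realType) (n1 n2 : nat) (A ell : 'I_n1 -> R)
    (Dt1 : 'M[R]_(n2, n1)) (U : 'cV[R]_n1 -> 'M[R]_(n1, n2)) (v : 'cV[R]_n1) :
  (forall j, A j / ell j != 0) ->
  ip1 (hodge1 A ell) (contr_Iv (hodge1 A ell) Dt1 U v (Dt1 *m v)) v = 0.
Proof.
move=> nz; rewrite /contr_Iv ip1_invmx_hodge1 // linearZ /= -scalemxAl mxE.
set P := U v *m (Dt1 *m v); set Q := Dt1^T *m (U v)^T *m v.
have QP : Q^T *m v = (P^T *m v)^T by rewrite /P /Q !trmx_mul !trmxK !mulmxA.
by rewrite linearB /= mulmxBl mxE QP [in X in _ + X]mxE [(_^T) 0 0]mxE subrr mulr0.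
Qed.

Lemma is_derive_mx_entry (R : realType) (m n : nat) (M : R -> 'M[R]_(m, n))
    (t : R) (i : 'I_m) (j : 'I_n) :
  derivable M t 1 -> is_derive t 1 (fun s => M s i j) (derive1 M t i j).
Proof.
move=> dM; apply: DeriveDef; first exact: (derivable_mxP _ _ _).1 dM i j.
by rewrite derive1E derive_mx // mxE.
Qed.

Lemma is_derive_Ekin_hodge1 (R : realType) (n : nat) (A ell : 'I_n -> R)
    (v : R -> 'cV[R]_n) (t : R) :
  derivable v t 1 ->
  is_derive t 1 (fun s => Ekin (hodge1 A ell) (v s))
    (ip1 (hodge1 A ell) (derive1 v t) (v t)).
Proof.
move=> dv; set c := fun i => A i / ell i.
have termE : (fun s => Ekin (hodge1 A ell) (v s)) =
    \sum_(i < n) (2%:R^-1 * c i) \*: ((fun s => v s i 0) * (fun s => v s i 0)).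
  apply/funext => s; rewrite fct_sumE /Ekin ip1_hodge1 mulr_sumr.
  by apply: eq_bigr => i _; rewrite /= [LHS]mulrA.
rewrite termE ip1_hodge1.
have -> : \sum_i c i * (derive1 v t i 0 * v t i 0) =
    \sum_(i < n) (2%:R^-1 * c i) *:
      (v t i 0 *: derive1 v t i 0 + v t i 0 *: derive1 v t i 0).
  by apply: eq_bigr => i _; rewrite /GRing.scale /=; field.
by apply: is_derive_sum => i; apply/is_deriveZ/is_deriveM; apply: is_derive_mx_entry.
Qed.

Theorem theorem3p3 (R : realType) (n0 n1 n2 : nat)
  (A ell : 'I_n1 -> R) (hA : forall j, 0 < A j) (hell : forall j, 0 < ell j)
  (Dt0 : 'M[R]_(n1, n0)) (Dt1 : 'M[R]_(n2, n1)) (D2 : 'M[R]_(n0, n1))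
  (hsbp : forall (b : 'cV[R]_n0) (w : 'cV[R]_n1),
      ip1 (hodge1 A ell) (Dt0 *m b) w = (b^T *m D2 *m hodge1 A ell *m w) 0 0)
  (U : {linear 'cV[R]_n1 -> 'M[R]_(n1, n2)})
  (T : R) (hT : 0 < T)
  (v : R -> 'cV[R]_n1) (B : R -> 'cV[R]_n0)
  (hvc : {within `[0, T], continuous v})
  (hvd : forall t, t \in `]0, T[ -> derivable v t 1)
  (hdvc : {within `[0, T], continuous (derive1 v)})
  (hBc : {within `[0, T], continuous B})
  (heuler : forall t, t \in `]0, T[ ->
      derive1 v t + contr_Iv (hodge1 A ell) Dt1 U (v t) (Dt1 *m v t)
        + Dt0 *m B t = 0)
  (hdiv : forall t, t \in `[0, T] -> D2 *m hodge1 A ell *m v t = 0) :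
  forall t, t \in `]0, T[ ->
    derivable (fun s => Ekin (hodge1 A ell) (v s)) t 1 /\
    derive1 (fun s => Ekin (hodge1 A ell) (v s)) t = 0.
Proof.
move=> t tI; have dE := is_derive_Ekin_hodge1 A ell (hvd t tI).
split; first exact: (@ex_derive _ _ _ _ _ _ _ dE).
have nz j : A j / ell j != 0 by rewrite mulf_neq0 ?invr_eq0 ?gt_eqF.
have tI' : t \in `[0, T] by move: tI; rewrite !in_itv /= => /andP[/ltW -> /ltW ->].
have vE : derive1 v t =
    - (contr_Iv (hodge1 A ell) Dt1 U (v t) (Dt1 *m v t) + Dt0 *m B t).
  by apply/eqP; rewrite -addr_eq0 addrA heuler.
rewrite derive1E (@derive_val _ _ _ _ _ _ _ dE) vE ip1_oppl ip1_addl.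
rewrite (ip1_contr_Iv_vorticity Dt1 U (v t) nz).
by rewrite (ip1_grad_divfree (hsbp _ _) (hdiv t tI')) add0r oppr0.
Qed.
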